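(* Let $\Omega$ be a Polish space and $(T(t))_{t\ge0}\subset\mathscr{L}(\mathscr{M}(\Omega),\sigma)$ a Markovian semigroup with transition kernels $k_t$. If it is $t_0$-regular for some $t_0>0$, then it is $s$-regular for every $s\ge t_0$, and moreover the measures $k_s(x,\cdot)$ and $k_t(y,\cdot)$ are equivalent for all $s,t\ge t_0$ and all $x,y\in\Omega$.
   Context: $\mathscr{M}(\Omega)$: finite signed Borel measures. A weakly continuous operator is one of the form $(T\mu)(A)=\int k(x,A)\,d\mu(x)$ with $k$ a bounded transition kernel (map $\Omega\times\mathscr{B}(\Omega)\to\mathbb{R}$, signed measure in the second variable, Borel measurable in the first, $\sup_x\lvert k\rvert(x,\Omega)<\infty$); $\mathscr{L}(\mathscr{M}(\Omega),\sigma)$ is the space of such operators. A semigroup $(T(t))_{t\ge0}$ satisfies $T(0)=I$ and $T(t+s)=T(t)T(s)$; $k_t$ denotes the kernel of $T(t)$. It is Markovian if each $k_t(x,\cdot)$ is a probability measure. For $t_0>0$ it is $t_0$-regular if $k_{t_0}(x,\cdot)$ and $k_{t_0}(y,\cdot)$ are equivalent (mutually absolutely continuous) for all $x,y\in\Omega$. *)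

From HB Require Import structures.
From mathcomp Require Import all_boot all_order all_algebra.
From mathcomp Require Import all_classical all_reals all_analysis.
Set Implicit Arguments. Unset Strict Implicit. Unset Printing Implicit Defensive.
Import Order.TTheory GRing.Theory Num.Theory.
Local Open Scope classical_set_scope.
Local Open Scope ring_scope.

Definition polish (R : realType) (T : topologicalType) : Prop :=
  (exists D : set T, countable D /\ dense D) /\
  exists dist : T -> T -> R,
    [/\ (forall x y, dist x y = 0 <-> x = y),
        (forall x y, dist x y = dist y x),
        (forall x y z, dist x z <= dist x y + dist y z),
        (forall A : set T, open A <->
           (forall x, A x -> exists2 e : R, 0 < e & forall y, dist x y < e -> A y)) &
        (forall u : nat -> T,
           (forall e : R, 0 < e -> exists N, forall m n, (N <= m)%N -> (N <= n)%N ->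
              dist (u m) (u n) < e) ->
           exists l : T, u @ \oo --> l)].

Definition borel (T : ptopologicalType) := g_sigma_algebraType (@open T).

Definition equiv_measures d (T : measurableType d) (R : realType)
  (m1 m2 : set T -> \bar R) : Prop := m1 `<< m2 /\ m2 `<< m1.

(* A family of Markov (probability) transition kernels k_t, t >= 0, on the
   Borel sets of T, whose associated operators
   (T(t) mu)(A) = \int k_t(x, A) dmu(x) form a semigroup:
   T(0) = I  <->  k_0(x, .) = delta_x,
   T(t+s) = T(t) T(s)  <->  k_{t+s}(x, A) = \int k_t(y, A) k_s(x, dy). *)
Definition markov_semigroup (R : realType) (T : ptopologicalType)
  (k : R -> R.-pker (borel T) ~> (borel T)) : Prop :=
  (forall (x : borel T) (A : set (borel T)), measurable A -> k 0 x A = \d_x A) /\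
  (forall (t s : R), 0 <= t -> 0 <= s -> forall (x : borel T) (A : set (borel T)),
      measurable A ->
      k (t + s) x A = (\int[k s x]_y k t y A)%E).

Definition regular_at (R : realType) (T : ptopologicalType)
  (k : R -> R.-pker (borel T) ~> (borel T)) (t0 : R) : Prop :=
  forall x y : borel T, equiv_measures (k t0 x) (k t0 y).

From HB Require Import structures.
From mathcomp Require Import all_boot all_order all_algebra.
From mathcomp Require Import all_classical all_reals all_analysis measurable_realfun.
Set Implicit Arguments. Unset Strict Implicit. Unset Printing Implicit Defensive.
Import Order.TTheory GRing.Theory Num.Theory.
Local Open Scope classical_set_scope.
Local Open Scope ring_scope.

(* For s >= t0 the semigroup law gives k_s(x, A) = \int k_{t0}(y, A) k_{s-t0}(x, dy).
   By t0-regularity the integrand y |-> k_{t0}(y, A) either vanishes identically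
   or nowhere, and a nonnegative function with zero integral against a probability
   measure vanishes somewhere.  Hence k_s(x, A) = 0 iff k_{t0}(z, A) = 0 for all z:
   every k_s(x, .) with s >= t0 has exactly the null sets of the k_{t0}(z, .). *)

Lemma ge0_integral_eq0_exists_zero d (X : measurableType d) (R : realType)
    (mu : {measure set X -> \bar R}) (f : X -> \bar R) :
  mu setT != 0%E -> measurable_fun setT f -> (forall x, 0 <= f x)%E ->
  (\int[mu]_x f x = 0)%E -> exists x, f x = 0%E.
Proof.
move=> muT0 mf f_ge0 intf0.
have : (\int[mu]_(x in setT) `|f x| = 0)%E.
  by rewrite -intf0; apply: eq_integral => x _; rewrite gee0_abs.
move/(ae_eq_integral_abs _ measurableT mf) => [N [mN muN0 fN]].
apply: contrapT => no_zero.
have NT : setT `<=` N by move=> x _; apply: fN => /(_ I) fx0; apply: no_zero; exists x.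
move: muT0; rewrite -measure_le0 -muN0.
by rewrite (le_measure _ _ _ NT) ?inE.
Qed.

Section regular_markov_semigroup.
Variables (R : realType) (T : ptopologicalType).
Variables (k : R -> R.-pker (borel T) ~> (borel T)) (t0 : R).
Hypotheses (k_markov : markov_semigroup k) (t0_ge0 : 0 <= t0).
Hypothesis k_regular : regular_at k t0.

Lemma regular_null_uniform (y z : borel T) (A : set (borel T)) :
  measurable A -> k t0 y A = 0%E -> k t0 z A = 0%E.
Proof. by have [_ /null_content_dominatesP] := k_regular y z; apply. Qed.

Lemma kernel_split_at (s : R) (x : borel T) (A : set (borel T)) :
  t0 <= s -> measurable A -> k s x A = (\int[k (s - t0) x]_y k t0 y A)%E.
Proof.
move=> t0s mA; rewrite -(proj2 k_markov) ?subr_ge0//.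
by rewrite addrC subrK.
Qed.

Lemma kernel_null_iff (s : R) (x : borel T) (A : set (borel T)) :
  t0 <= s -> measurable A -> k s x A = 0%E <-> forall z, k t0 z A = 0%E.
Proof.
move=> t0s mA; rewrite kernel_split_at //; split => [int0 z|null_t0].
- have kT0 : k (s - t0) x setT != 0%E by rewrite prob_kernel oner_neq0.
  have [y kyA0] := ge0_integral_eq0_exists_zero kT0
    (measurable_kernel (k t0) A mA) (fun y => measure_ge0 (k t0 y) A) int0.
  exact: regular_null_uniform kyA0.
- by rewrite (eq_integral (fun=> 0%E)) ?integral0 // => y _; exact: null_t0.
Qed.

Lemma kernel_abs_continuous (s t : R) (x y : borel T) :
  t0 <= s -> t0 <= t -> k s x `<< k t y.
Proof.
move=> t0s t0t; apply/null_content_dominatesP => A mA kyA0.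
by apply/(kernel_null_iff x t0s mA)/(kernel_null_iff y t0t mA).
Qed.

End regular_markov_semigroup.

Theorem mainTheorem10 (R : realType) (T : ptopologicalType)
  (k : R -> R.-pker (borel T) ~> (borel T)) (t0 : R) :
  polish R T -> markov_semigroup k -> 0 < t0 -> regular_at k t0 ->
  (forall s : R, t0 <= s -> regular_at k s) /\
  (forall (s t : R) (x y : borel T), t0 <= s -> t0 <= t ->
     equiv_measures (k s x) (k t y)).
Proof.
move=> _ k_markov /ltW t0_ge0 k_regular.
have k_dom := kernel_abs_continuous k_markov t0_ge0 k_regular.
split=> [s t0s x y|s t x y t0s t0t].
- by split; [exact: (k_dom s s x y t0s t0s)|exact: (k_dom s s y x t0s t0s)].
- by split; [exact: (k_dom s t x y t0s t0t)|exact: (k_dom t s y x t0t t0s)].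
Qed.
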